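(* For every integer $n\geq 2$, the operator $W_n^{*}$ on $H^2$ is mixing; in particular, $W_n^{*}$ is hypercyclic.
   Context: $H^2$ denotes the Hardy space of analytic functions $f(z)=\sum_{k\ge0}\hat f(k)z^k$ on the open unit disk $\mathbb{D}$ with $\|f\|_2^2=\sum_{k\ge0}|\hat f(k)|^2<\infty$, with inner product $\langle f,g\rangle=\sum_k \hat f(k)\overline{\hat g(k)}$. For $n\in\mathbb{N}$, $W_n$ is the bounded weighted composition operator on $H^2$ given by $W_nf(z)=(1+z+\cdots+z^{n-1})f(z^n)$, and $W_n^{*}$ is its Hilbert-space adjoint. An operator $T$ on a separable Banach space $Y$ is mixing if for every pair of non-empty open sets $U,V\subseteq Y$ there is $N$ with $T^k(U)\cap V\neq\emptyset$ for all $k\geq N$; it is hypercyclic if some $f\in Y$ has dense orbit $\{T^kf: k\in\mathbb{N}\}$. *)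

(* H^2 is represented by the sequences of Taylor
   coefficients (f^(k))_{k>=0} of its elements, as in the definition of H^2. *)
From Stdlib Require Import Reals Arith.
From Coquelicot Require Import Coquelicot.
Open Scope R_scope.

Definition inH2 (f : nat -> C) : Prop :=
  ex_series (fun k => (Cmod (f k)) ^ 2).

Definition h2norm (f : nat -> C) : R :=
  sqrt (Series (fun k => (Cmod (f k)) ^ 2)).

Definition h2dist (f g : nat -> C) : R :=
  h2norm (fun k => Cminus (f k) (g k)).

Definition h2inner (f g : nat -> C) : C :=
  (Series (fun k => Re (Cmult (f k) (Cconj (g k)))),
   Series (fun k => Im (Cmult (f k) (Cconj (g k))))).

(* W_n f (z) = (1 + z + ... + z^(n-1)) f(z^n): in coefficients,
   the coefficient of z^(n k + j), 0 <= j < n, is f^(k); i.e. (W_n f)^(m) = f^(m / n). *)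
Definition W (n : nat) (f : nat -> C) : nat -> C := fun m => f (m / n)%nat.

Definition is_adjoint_H2 (S T : (nat -> C) -> (nat -> C)) : Prop :=
  (forall f, inH2 f -> inH2 (T f)) /\
  (forall f g, inH2 f -> inH2 g -> h2inner (S f) g = h2inner f (T g)).

Definition openH2 (U : (nat -> C) -> Prop) : Prop :=
  (forall f, U f -> inH2 f) /\
  (forall f, U f -> exists eps, 0 < eps /\
     forall g, inH2 g -> h2dist g f < eps -> U g).

Definition mixing (T : (nat -> C) -> (nat -> C)) : Prop :=
  forall U V : (nat -> C) -> Prop,
    openH2 U -> openH2 V -> (exists f, U f) -> (exists g, V g) ->
    exists N : nat, forall k : nat, (N <= k)%nat ->
      exists f, U f /\ V (Nat.iter k T f).

Definition hypercyclic (T : (nat -> C) -> (nat -> C)) : Prop :=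
  exists f, inH2 f /\
    forall g, inH2 g -> forall eps, 0 < eps ->
      exists k : nat, h2dist (Nat.iter k T f) g < eps.

(* On Taylor coefficients, W_n^* sums consecutive blocks of n coefficients, so its k-th
   power sums blocks of n^k coefficients.  Hence a finitely supported vector whose
   coefficients add up to 0 is annihilated by all large powers, and such vectors with
   rational coordinates form a countable dense set.  Conversely, spreading v evenly over
   blocks of length N is a right inverse of the N-block sum, and it shrinks squared norms by
   the factor 2/N.  Mixing follows as in Kitai's criterion: u plus the spread of v over
   blocks of length n^k is close to u and is mapped to v by the k-th power.  A hypercyclic
   vector is the sum of the spreads of psi_j over blocks of length n^(m_j), where psi_j
   runs through the dense set with every element repeated infinitely often and m_j grows
   fast enough. *)

From Stdlib Require Import Reals Lia Lra FunctionalExtensionality Cantor.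
From Coquelicot Require Import Coquelicot.
Open Scope R_scope.

(* [K] terms [f 0 + ... + f (K-1)], unlike the [K+1] terms of Coquelicot's [sum_n f K]. *)
Fixpoint rsum (f : nat -> R) (K : nat) : R :=
  match K with O => 0 | S K => rsum f K + f K end.

Definition csum (f : nat -> C) (K : nat) : C :=
  (rsum (fun i => Re (f i)) K, rsum (fun i => Im (f i)) K).

Lemma rsum_ext f g K : (forall i, (i < K)%nat -> f i = g i) -> rsum f K = rsum g K.
Proof. induction K as [|K IH]; simpl; intros H; auto. rewrite IH, H; auto. Qed.

Lemma rsum_plus f g K : rsum (fun i => f i + g i) K = rsum f K + rsum g K.
Proof. induction K as [|K IH]; simpl; lra. Qed.

Lemma rsum_mult_l c f K : rsum (fun i => c * f i) K = c * rsum f K.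
Proof. induction K as [|K IH]; simpl; lra. Qed.

Lemma rsum_const c K : rsum (fun _ => c) K = INR K * c.
Proof. induction K as [|K IH]; simpl rsum; [simpl | rewrite S_INR]; lra. Qed.

Lemma rsum_eq_0 f K : (forall i, (i < K)%nat -> f i = 0) -> rsum f K = 0.
Proof. intros H. rewrite (rsum_ext f (fun _ => 0)), rsum_const; auto. lra. Qed.

Lemma rsum_add_range f a b : rsum f (a + b) = rsum f a + rsum (fun j => f (a + j)%nat) b.
Proof. induction b as [|b IH]; simpl; rewrite ?Nat.add_0_r, ?Nat.add_succ_r; simpl; lra. Qed.

Lemma rsum_split f h K : (h <= K)%nat ->
  rsum f K = rsum f h + rsum (fun j => f (h + j)%nat) (K - h).
Proof. intros H. rewrite <- rsum_add_range. f_equal. lia. Qed.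

Lemma rsum_blocks f B M :
  rsum (fun a => rsum (fun l => f (a * B + l)%nat) B) M = rsum f (M * B).
Proof.
  induction M as [|M IH]; simpl; auto.
  rewrite IH, (Nat.add_comm B), rsum_add_range. reflexivity.
Qed.

Lemma rsum_swap (f : nat -> nat -> R) I J :
  rsum (fun i => rsum (f i) J) I = rsum (fun j => rsum (fun i => f i j) I) J.
Proof.
  induction I as [|I IH]; simpl.
  - symmetry; apply rsum_eq_0; reflexivity.
  - rewrite IH, <- rsum_plus. reflexivity.
Qed.

Lemma rsum_le f g K : (forall i, (i < K)%nat -> f i <= g i) -> rsum f K <= rsum g K.
Proof.
  induction K as [|K IH]; simpl; intros H; [lra|].
  assert (rsum f K <= rsum g K) by (apply IH; auto).
  specialize (H K (Nat.lt_succ_diag_r K)). lra.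
Qed.

Lemma rsum_nonneg f K : (forall i, 0 <= f i) -> 0 <= rsum f K.
Proof. intros H. rewrite <- (Rmult_0_r (INR K)), <- rsum_const. apply rsum_le; auto. Qed.

Lemma rsum_le_mono f K K' : (forall i, 0 <= f i) -> (K <= K')%nat -> rsum f K <= rsum f K'.
Proof.
  intros H HK. replace K' with (K + (K' - K))%nat by lia. rewrite rsum_add_range.
  pose proof (rsum_nonneg (fun j => f (K + j)%nat) (K' - K) (fun j => H _)). lra.
Qed.

Lemma rsum_zero_beyond f L K :
  (forall i, (L <= i)%nat -> f i = 0) -> (L <= K)%nat -> rsum f K = rsum f L.
Proof.
  intros H HK. replace K with (L + (K - L))%nat by lia. rewrite rsum_add_range.
  rewrite (rsum_eq_0 _ (K - L)); [lra|]. intros; apply H; lia.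
Qed.

Lemma Cauchy_Schwarz_step A P Q a p : 0 <= P -> 0 <= Q -> 0 < p -> A ^ 2 <= P * Q ->
  (A + a) ^ 2 <= (P + p) * (Q + a ^ 2 / p).
Proof.
  intros HP HQ Hp HA. set (t := a / p).
  replace a with (t * p) by (unfold t; field; lra).
  replace ((t * p) ^ 2 / p) with (t ^ 2 * p) by (field; lra).
  (* [P (P t^2 + Q - 2 A t) = (P t - A)^2 + (P Q - A^2)] *)
  assert (0 <= P * t ^ 2 + Q - 2 * A * t).
  { destruct (Req_dec P 0) as [E|E].
    - subst P. destruct (Req_dec A 0) as [->|HA0]; [nra|].
      pose proof (pow_nonzero A 2 HA0). pose proof (pow2_ge_0 A). lra.
    - assert (HP' : 0 < P) by (destruct HP; [assumption | congruence]).
      apply Rmult_le_reg_l with P; [exact HP' |]. pose proof (pow2_ge_0 (P * t - A)). nra. }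
  nra.
Qed.

Lemma rsum_Cauchy_Schwarz a p K : (forall j, 0 < p j) ->
  rsum a K ^ 2 <= rsum p K * rsum (fun j => a j ^ 2 / p j) K.
Proof.
  intros Hp. induction K as [|K IH]; simpl rsum; [lra|].
  apply Cauchy_Schwarz_step; auto.
  - apply rsum_nonneg; intros j; specialize (Hp j); lra.
  - apply rsum_nonneg; intros j; specialize (Hp j). apply Rdiv_le_0_compat; nra.
Qed.

Lemma rsum_sum_f_R0 a K : rsum a (S K) = sum_f_R0 a K.
Proof. induction K as [|K IH]; simpl in *; [lra | rewrite <- IH; reflexivity]. Qed.

Lemma partial_sums_cv a : ex_series a ->
  forall d, 0 < d -> exists N, forall K, (N <= K)%nat -> Rabs (rsum a K - Series a) < d.
Proof.
  intros [l Hl] d Hd. rewrite (is_series_unique _ _ Hl). apply is_series_Reals in Hl.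
  destruct (Hl d Hd) as [N HN]. exists (S N). intros [|K] HK; [lia|].
  rewrite rsum_sum_f_R0. apply HN. lia.
Qed.

Lemma Series_finite a L : (forall i, (L <= i)%nat -> a i = 0) -> Series a = rsum a L.
Proof.
  intros H. apply is_series_unique, is_series_Reals. intros e He. exists L. intros m Hm.
  rewrite <- rsum_sum_f_R0, (rsum_zero_beyond a L) by (auto; lia).
  unfold Rdist. rewrite Rminus_diag, Rabs_R0. lra.
Qed.

Lemma ex_series_bounded a B : (forall i, 0 <= a i) -> (forall K, rsum a K <= B) ->
  ex_series a /\ Series a <= B.
Proof.
  intros H0 HB.
  destruct (ex_finite_lim_seq_incr (sum_f_R0 a) B) as [l Hl].
  - intros m; simpl; specialize (H0 (S m)); lra.
  - intros m; rewrite <- rsum_sum_f_R0; auto.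
  - assert (Hs : is_series a l) by now apply is_series_Reals, is_lim_seq_Reals.
    split; [exists l; exact Hs|]. rewrite (is_series_unique _ _ Hs).
    assert (Hle : Rbar_le l B).
    { apply (is_lim_seq_le (sum_f_R0 a) (fun _ => B)); auto using is_lim_seq_const.
      intros m; rewrite <- rsum_sum_f_R0; auto. }
    exact Hle.
Qed.

Lemma rsum_le_Series a K : (forall i, 0 <= a i) -> ex_series a -> rsum a K <= Series a.
Proof.
  intros H0 Hex. destruct (Rle_or_lt (rsum a K) (Series a)) as [|Hlt]; auto.
  destruct (partial_sums_cv a Hex (rsum a K - Series a)) as [N HN]; [lra|].
  specialize (HN (N + K)%nat ltac:(lia)).
  pose proof (rsum_le_mono a K (N + K) H0 ltac:(lia)).
  apply Rabs_def2 in HN. lra.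
Qed.

Lemma csum_ext (f g : nat -> C) K : (forall i, (i < K)%nat -> f i = g i) -> csum f K = csum g K.
Proof. intros H. unfold csum. f_equal; apply rsum_ext; intros i Hi; rewrite H; auto. Qed.

Lemma csum_plus (f g : nat -> C) K : csum (fun i => f i + g i)%C K = (csum f K + csum g K)%C.
Proof. apply injective_projections; apply rsum_plus. Qed.

Lemma csum_const c K : csum (fun _ => c) K = (INR K * c)%C.
Proof. apply injective_projections; simpl; rewrite rsum_const; unfold Re, Im; ring. Qed.

Lemma csum_zero_beyond (f : nat -> C) L K :
  (forall i, (L <= i)%nat -> f i = 0%C) -> (L <= K)%nat -> csum f K = csum f L.
Proof.
  intros H HK. unfold csum. f_equal; apply rsum_zero_beyond; auto; intros i Hi; rewrite H; auto.
Qed.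

Lemma csum_blocks (f : nat -> C) B M :
  csum (fun a => csum (fun l => f (a * B + l)%nat) B) M = csum f (M * B).
Proof.
  apply injective_projections;
    [apply (rsum_blocks (fun i => Re (f i))) | apply (rsum_blocks (fun i => Im (f i)))].
Qed.

Lemma csum_swap (f : nat -> nat -> C) I J :
  csum (fun i => csum (f i) J) I = csum (fun j => csum (fun i => f i j) I) J.
Proof.
  apply injective_projections;
    [apply (rsum_swap (fun i j => Re (f i j))) | apply (rsum_swap (fun i j => Im (f i j)))].
Qed.

Lemma csum_eq_0 (f : nat -> C) K : (forall i, (i < K)%nat -> f i = 0%C) -> csum f K = 0%C.
Proof. intros H. rewrite (csum_ext f (fun _ => 0%C) K H), csum_const. ring. Qed.

Lemma csum_add_range (f : nat -> C) a b :
  csum f (a + b) = (csum f a + csum (fun j => f (a + j)%nat) b)%C.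
Proof. apply injective_projections; apply rsum_add_range. Qed.

Lemma csum_split (f : nat -> C) h K : (h <= K)%nat ->
  csum f K = (csum f h + csum (fun j => f (h + j)%nat) (K - h))%C.
Proof. intros H. rewrite <- csum_add_range. f_equal. lia. Qed.

Lemma csum_conj (f : nat -> C) K : csum (fun i => Cconj (f i)) K = Cconj (csum f K).
Proof.
  induction K as [|K IH].
  - apply injective_projections; simpl; ring.
  - change (csum (fun i => Cconj (f i)) K + Cconj (f K) = Cconj (csum f K + f K))%C.
    rewrite IH, Cplus_conj. reflexivity.
Qed.

Lemma Cmod_csum_le (f : nat -> C) K : Cmod (csum f K) <= rsum (fun i => Cmod (f i)) K.
Proof.
  induction K as [|K IH].
  - change (csum f 0) with (RtoC 0). rewrite Cmod_0. simpl. lra.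
  - change (csum f (S K)) with (csum f K + f K)%C. simpl rsum.
    pose proof (Cmod_triangle (csum f K) (f K)). lra.
Qed.

Lemma Cmod_csum_Cauchy_Schwarz (f : nat -> C) p K : (forall j, 0 < p j) ->
  Cmod (csum f K) ^ 2 <= rsum p K * rsum (fun j => Cmod (f j) ^ 2 / p j) K.
Proof.
  intros Hp. eapply Rle_trans; [|apply rsum_Cauchy_Schwarz; exact Hp].
  pose proof (Cmod_csum_le f K). pose proof (Cmod_ge_0 (csum f K)).
  apply pow_incr; lra.
Qed.

Lemma Cmod_csum_sq_le (f : nat -> C) K :
  Cmod (csum f K) ^ 2 <= INR K * rsum (fun j => Cmod (f j) ^ 2) K.
Proof.
  rewrite <- (Rmult_1_r (INR K)), <- rsum_const.
  replace (rsum (fun j => Cmod (f j) ^ 2) K) with (rsum (fun j => Cmod (f j) ^ 2 / 1) K)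
    by (apply rsum_ext; intros; field).
  apply Cmod_csum_Cauchy_Schwarz; intros; lra.
Qed.

Lemma Cmod_plus_sq_le a b : Cmod (a + b) ^ 2 <= 2 * Cmod a ^ 2 + 2 * Cmod b ^ 2.
Proof.
  pose proof (Cmod_triangle a b). pose proof (Cmod_ge_0 (a + b)).
  assert (Cmod (a + b) ^ 2 <= (Cmod a + Cmod b) ^ 2) by (apply pow_incr; lra).
  pose proof (pow2_ge_0 (Cmod a - Cmod b)). nra.
Qed.

Definition sqsum (f : nat -> C) (K : nat) : R := rsum (fun i => Cmod (f i) ^ 2) K.

Definition sqnorm_le (f : nat -> C) (B : R) : Prop := forall K, sqsum f K <= B.

Lemma sqsum_nonneg f K : 0 <= sqsum f K.
Proof. apply rsum_nonneg; intros; apply pow2_ge_0. Qed.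

Lemma sqnorm_le_weaken f A B : A <= B -> sqnorm_le f A -> sqnorm_le f B.
Proof. intros HAB Hf K. specialize (Hf K). lra. Qed.

Lemma sqnorm_le_add f g A B : sqnorm_le f A -> sqnorm_le g B ->
  sqnorm_le (fun i => f i + g i)%C (2 * A + 2 * B).
Proof.
  intros Hf Hg K. specialize (Hf K). specialize (Hg K). unfold sqsum in *.
  eapply Rle_trans.
  - apply (rsum_le _ (fun i => 2 * Cmod (f i) ^ 2 + 2 * Cmod (g i) ^ 2)).
    intros; apply Cmod_plus_sq_le.
  - rewrite rsum_plus, !rsum_mult_l. lra.
Qed.

Lemma sqnorm_le_finite (f : nat -> C) L :
  (forall i, (L <= i)%nat -> f i = 0%C) -> sqnorm_le f (sqsum f L).
Proof.
  intros H K. unfold sqsum. destruct (Nat.le_ge_cases K L).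
  - apply rsum_le_mono; auto. intros; apply pow2_ge_0.
  - rewrite (rsum_zero_beyond _ L K); [lra| |auto].
    intros i Hi. rewrite H, Cmod_0 by auto. ring.
Qed.

Lemma inH2_of_sqnorm_le f B : sqnorm_le f B -> inH2 f.
Proof. intros H. apply (ex_series_bounded _ B); auto. intros; apply pow2_ge_0. Qed.

Lemma h2dist_lt f g B eps : 0 < eps -> B < eps ^ 2 ->
  sqnorm_le (fun i => f i - g i)%C B -> h2dist f g < eps.
Proof.
  intros He HB H.
  destruct (ex_series_bounded (fun i => Cmod (f i - g i)%C ^ 2) B) as [Hex Hs]; auto.
  { intros; apply pow2_ge_0. }
  assert (0 <= Series (fun i => Cmod (f i - g i)%C ^ 2)).
  { apply (Rle_trans _ (sqsum (fun i => f i - g i)%C 0)); [apply sqsum_nonneg|].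
    apply rsum_le_Series; auto. intros; apply pow2_ge_0. }
  unfold h2dist, h2norm. rewrite <- (sqrt_pow2 eps) by lra.
  apply sqrt_lt_1_alt. lra.
Qed.

Lemma sqnorm_le_tail g d : inH2 g -> 0 < d ->
  exists N, sqnorm_le (fun i => if (i <? N)%nat then 0%C else g i) d.
Proof.
  intros Hg Hd. set (a i := Cmod (g i) ^ 2).
  destruct (partial_sums_cv a Hg d Hd) as [N HN]. exists N. intros K.
  assert (Ha : forall i, 0 <= a i) by (intros; apply pow2_ge_0).
  unfold sqsum. eapply Rle_trans.
  { apply rsum_le_mono with (K' := (N + K)%nat); [intros; apply pow2_ge_0 | lia]. }
  rewrite rsum_add_range, rsum_eq_0, Rplus_0_l.
  2: { intros i Hi. destruct (Nat.ltb_spec i N); [|lia]. rewrite Cmod_0. ring. }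
  rewrite (rsum_ext _ (fun j => a (N + j)%nat)).
  2: { intros j _. destruct (Nat.ltb_spec (N + j) N); [lia | reflexivity]. }
  pose proof (rsum_add_range a N K). pose proof (rsum_le_Series a (N + K) Ha Hg).
  specialize (HN N (le_n N)). apply Rabs_def2 in HN. lra.
Qed.

Definition block_sum (N : nat) (g : nat -> C) : nat -> C :=
  fun a => csum (fun l => g (a * N + l)%nat) N.

Definition unit_vec (k : nat) : nat -> C := fun i => if (i =? k)%nat then 1%C else 0%C.

Lemma h2inner_finite (u g : nat -> C) L : (forall i, (L <= i)%nat -> u i = 0%C) ->
  h2inner u g = csum (fun i => u i * Cconj (g i))%C L.
Proof.
  intros H. unfold h2inner, csum. f_equal; apply Series_finite;
    intros i Hi; rewrite H, Cmult_0_l by exact Hi; reflexivity.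
Qed.

Lemma h2inner_unit_vec k g : h2inner (unit_vec k) g = Cconj (g k).
Proof.
  rewrite (h2inner_finite _ _ (S k)).
  2: { intros i Hi. unfold unit_vec. destruct (Nat.eqb_spec i k); [lia | reflexivity]. }
  change (csum (fun i => unit_vec k i * Cconj (g i)) k + unit_vec k k * Cconj (g k)
          = Cconj (g k))%C.
  rewrite csum_eq_0.
  - unfold unit_vec. rewrite Nat.eqb_refl. ring.
  - intros i Hi. unfold unit_vec. destruct (Nat.eqb_spec i k); [lia | ring].
Qed.

Lemma inH2_unit_vec k : inH2 (unit_vec k).
Proof.
  apply (inH2_of_sqnorm_le _ (sqsum (unit_vec k) (S k))), sqnorm_le_finite.
  intros i Hi. unfold unit_vec. destruct (Nat.eqb_spec i k); [lia | reflexivity].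
Qed.

Lemma h2inner_W_unit_vec n k g : (1 <= n)%nat ->
  h2inner (W n (unit_vec k)) g = Cconj (block_sum n g k).
Proof.
  intros Hn. unfold W, unit_vec.
  rewrite (h2inner_finite _ _ (k * n + n)).
  2: { intros i Hi. destruct (Nat.eqb_spec (i / n) k); [|reflexivity].
       assert (S k <= i / n)%nat by (apply Nat.div_le_lower_bound; lia). lia. }
  rewrite csum_add_range, csum_eq_0, Cplus_0_l.
  - unfold block_sum. rewrite <- csum_conj. apply csum_ext. intros l Hl.
    replace ((k * n + l) / n)%nat with k by (rewrite Nat.div_add_l, Nat.div_small; lia).
    rewrite Nat.eqb_refl. ring.
  - intros i Hi. destruct (Nat.eqb_spec (i / n) k); [|ring].
    assert (i / n < k)%nat by (apply Nat.Div0.div_lt_upper_bound; lia). lia.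
Qed.

Lemma W_adjoint_eq n Wstar g : (1 <= n)%nat -> is_adjoint_H2 (W n) Wstar -> inH2 g ->
  Wstar g = block_sum n g.
Proof.
  intros Hn [_ Hadj] Hg. apply functional_extensionality. intros k.
  pose proof (Hadj (unit_vec k) g (inH2_unit_vec k) Hg) as E.
  rewrite h2inner_W_unit_vec, h2inner_unit_vec in E by exact Hn.
  rewrite <- (Cconj_conj (Wstar g k)), <- E, Cconj_conj. reflexivity.
Qed.

Lemma block_sum_1 g : block_sum 1 g = g.
Proof.
  apply functional_extensionality. intros a. unfold block_sum, csum. simpl.
  rewrite !Nat.mul_1_r, !Nat.add_0_r, !Rplus_0_l. destruct (g a); reflexivity.
Qed.

Lemma block_sum_block_sum N M g : block_sum M (block_sum N g) = block_sum (N * M) g.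
Proof.
  apply functional_extensionality. intros a. unfold block_sum.
  replace (N * M)%nat with (M * N)%nat by ring.
  rewrite <- csum_blocks. apply csum_ext. intros j Hj. apply csum_ext. intros l Hl.
  f_equal. nia.
Qed.

Lemma adjoint_iter_inH2 S T f k : is_adjoint_H2 S T -> inH2 f -> inH2 (Nat.iter k T f).
Proof. intros [HT _] Hf. induction k as [|k IH]; simpl; auto. Qed.

Lemma W_adjoint_iter n Wstar f k : (1 <= n)%nat -> is_adjoint_H2 (W n) Wstar -> inH2 f ->
  Nat.iter k Wstar f = block_sum (n ^ k) f.
Proof.
  intros Hn Hadj Hf. induction k as [|k IH]; simpl.
  - symmetry. apply block_sum_1.
  - rewrite (W_adjoint_eq n Wstar _ Hn Hadj (adjoint_iter_inH2 _ _ f k Hadj Hf)).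
    rewrite IH, block_sum_block_sum, Nat.mul_comm. reflexivity.
Qed.

Lemma block_sum_plus N (f g : nat -> C) :
  block_sum N (fun i => f i + g i)%C = (fun a => block_sum N f a + block_sum N g a)%C.
Proof. apply functional_extensionality. intros a. apply csum_plus. Qed.

Lemma block_sum_csum N (F : nat -> nat -> C) J a :
  block_sum N (fun i => csum (fun j => F j i) J) a = csum (fun j => block_sum N (F j) a) J.
Proof. apply csum_swap. Qed.

Lemma block_sum_zero_sum N (v : nat -> C) L : (L <= N)%nat ->
  (forall i, (L <= i)%nat -> v i = 0%C) -> csum v L = 0%C -> block_sum N v = (fun _ => 0%C).
Proof.
  intros HL Hv Hsum. apply functional_extensionality. intros [|a]; unfold block_sum.
  - rewrite <- Hsum, <- (csum_zero_beyond v L N) by auto. reflexivity.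
  - apply csum_eq_0. intros l _. apply Hv. nia.
Qed.

Lemma sqnorm_le_block_sum N g B : sqnorm_le g B -> sqnorm_le (block_sum N g) (INR N * B).
Proof.
  intros Hg K. unfold sqsum, block_sum.
  eapply Rle_trans.
  - apply (rsum_le _ (fun a => INR N * rsum (fun l => Cmod (g (a * N + l)%nat) ^ 2) N)).
    intros a _. apply Cmod_csum_sq_le.
  - rewrite rsum_mult_l, (rsum_blocks (fun i => Cmod (g i) ^ 2)).
    apply Rmult_le_compat_l; [apply pos_INR | apply Hg].
Qed.

Lemma RtoC_mult_inv_l (r : R) (z : C) : r <> 0 -> (r * (RtoC (/ r) * z))%C = z.
Proof. intros Hr. rewrite Cmult_assoc, <- RtoC_mult, Rinv_r, Cmult_1_l; auto. Qed.

Lemma Cmod_RtoC_mult_sq (r : R) (z : C) : Cmod (r * z) ^ 2 = r ^ 2 * Cmod z ^ 2.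
Proof. rewrite Cmod_mult, Cmod_R, Rpow_mult_distr, pow2_abs. reflexivity. Qed.

(* The mass of [v 0] is put on [[N/2, N)] rather than on the whole first block, so that
   [spread N v] vanishes below [N/2]. *)
Definition spread (N : nat) (v : nat -> C) : nat -> C := fun i =>
  if (i <? N)%nat then
    if (i <? N / 2)%nat then 0%C else (RtoC (/ INR (N - N / 2)) * v 0%nat)%C
  else (RtoC (/ INR N) * v (i / N)%nat)%C.

Lemma spread_low N v i : (i < N / 2)%nat -> spread N v i = 0%C.
Proof.
  intros Hi. unfold spread.
  destruct (Nat.ltb_spec i N); [|pose proof (Nat.Div0.div_le_upper_bound N 2 N); lia].
  destruct (Nat.ltb_spec i (N / 2)); [reflexivity | lia].
Qed.

Lemma spread_first_block N v l : (N / 2 <= l < N)%nat ->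
  spread N v l = (RtoC (/ INR (N - N / 2)) * v 0%nat)%C.
Proof.
  intros Hl. unfold spread.
  destruct (Nat.ltb_spec l N); [|lia]. destruct (Nat.ltb_spec l (N / 2)); [lia | reflexivity].
Qed.

Lemma spread_next_block N v a l : (l < N)%nat ->
  spread N v (S a * N + l) = (RtoC (/ INR N) * v (S a))%C.
Proof.
  intros Hl. unfold spread.
  destruct (Nat.ltb_spec (S a * N + l) N); [nia|].
  rewrite Nat.div_add_l, Nat.div_small by lia. rewrite Nat.add_0_r. reflexivity.
Qed.

Lemma half_lt N : (1 <= N)%nat -> (N / 2 < N)%nat.
Proof. intros HN. apply Nat.div_lt; lia. Qed.

Lemma block_sum_spread N v : (1 <= N)%nat -> block_sum N (spread N v) = v.
Proof.
  intros HN. pose proof (half_lt N HN) as Hh.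
  apply functional_extensionality. intros [|a]; unfold block_sum.
  - rewrite (csum_split _ (N / 2)) by lia. rewrite csum_eq_0, Cplus_0_l.
    + rewrite (csum_ext _ (fun _ => RtoC (/ INR (N - N / 2)) * v 0%nat)%C), csum_const.
      * apply RtoC_mult_inv_l, not_0_INR. lia.
      * intros l Hl. apply spread_first_block. lia.
    + intros l Hl. apply spread_low. lia.
  - rewrite (csum_ext _ (fun _ => RtoC (/ INR N) * v (S a))%C), csum_const.
    + apply RtoC_mult_inv_l, not_0_INR. lia.
    + intros l Hl. apply spread_next_block. exact Hl.
Qed.

Lemma sqsum_spread_block N v a : (1 <= N)%nat ->
  rsum (fun l => Cmod (spread N v (a * N + l)) ^ 2) N <= 2 / INR N * Cmod (v a) ^ 2.
Proof.
  intros HN. pose proof (half_lt N HN) as Hh. pose proof (pow2_ge_0 (Cmod (v a))).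
  assert (HNpos : 0 < INR N) by (apply lt_0_INR; lia).
  destruct a as [|a].
  - assert (Hm : 0 < INR (N - N / 2)) by (apply lt_0_INR; lia).
    assert (H2m : INR N <= 2 * INR (N - N / 2)).
    { replace 2 with (INR 2) by (simpl; lra). rewrite <- mult_INR. apply le_INR.
      pose proof (Nat.Div0.mul_div_le N 2). lia. }
    rewrite (rsum_split _ (N / 2)) by lia. rewrite rsum_eq_0, Rplus_0_l.
    + rewrite (rsum_ext _ (fun _ => (/ INR (N - N / 2)) ^ 2 * Cmod (v 0%nat) ^ 2)), rsum_const.
      * replace (INR (N - N / 2) * ((/ INR (N - N / 2)) ^ 2 * Cmod (v 0%nat) ^ 2))
          with (/ INR (N - N / 2) * Cmod (v 0%nat) ^ 2) by (field; lra).
        apply Rmult_le_compat_r; [lra|].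
        replace (2 / INR N) with (/ (INR N / 2)) by (field; lra).
        apply Rinv_le_contravar; lra.
      * intros l Hl. rewrite spread_first_block by lia. apply Cmod_RtoC_mult_sq.
    + intros l Hl. rewrite spread_low by lia. rewrite Cmod_0. ring.
  - rewrite (rsum_ext _ (fun _ => (/ INR N) ^ 2 * Cmod (v (S a)) ^ 2)), rsum_const.
    + replace (INR N * ((/ INR N) ^ 2 * Cmod (v (S a)) ^ 2))
        with (1 / INR N * Cmod (v (S a)) ^ 2) by (field; lra).
      apply Rmult_le_compat_r; [lra|]. apply Rmult_le_compat_r; [|lra].
      left. apply Rinv_0_lt_compat. exact HNpos.
    + intros l Hl. rewrite spread_next_block by exact Hl. apply Cmod_RtoC_mult_sq.
Qed.

Lemma sqnorm_le_spread N v B : (1 <= N)%nat -> sqnorm_le v B ->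
  sqnorm_le (spread N v) (2 / INR N * B).
Proof.
  intros HN Hv K. unfold sqsum.
  assert (0 <= 2 / INR N) by (apply Rdiv_le_0_compat; [lra | apply lt_0_INR; lia]).
  eapply Rle_trans.
  { apply rsum_le_mono with (K' := (K * N)%nat); [intros; apply pow2_ge_0 | nia]. }
  rewrite <- (rsum_blocks (fun i => Cmod (spread N v i) ^ 2)).
  eapply Rle_trans.
  { apply rsum_le. intros a _. apply sqsum_spread_block. exact HN. }
  rewrite rsum_mult_l. apply Rmult_le_compat_l; [lra | apply Hv].
Qed.

Lemma INR_Z_to_nat_sub z : INR (Z.to_nat z) - INR (Z.to_nat (- z)) = IZR z.
Proof.
  destruct z as [|p|p]; simpl; rewrite ?INR_IPR; unfold IZR; lra.
Qed.

Definition nat_above (x : R) : nat := Z.to_nat (up x).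

Lemma nat_above_gt x : x < INR (nat_above x).
Proof.
  destruct (archimed x) as [Hx _]. unfold nat_above.
  pose proof (INR_Z_to_nat_sub (up x)). pose proof (pos_INR (Z.to_nat (- up x))). lra.
Qed.

Lemma pow_nat_above_gt n x : (2 <= n)%nat -> x < INR (n ^ nat_above x).
Proof.
  intros Hn. apply (Rlt_trans _ _ _ (nat_above_gt x)).
  apply lt_INR, Nat.pow_gt_lin_r. lia.
Qed.

Definition R_of_code (c : nat) : R :=
  let (a, p) := of_nat c in let (b, d) := of_nat p in (INR a - INR b) / INR (S d).

Lemma R_of_code_approx x eps : 0 < eps -> exists c, Rabs (R_of_code c - x) < eps.
Proof.
  intros He. destruct (archimed_cor1 eps He) as [D [HD HD0]].
  set (k := up (x * INR D)). destruct (archimed (x * INR D)) as [Hk1 Hk2]. fold k in Hk1, Hk2.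
  exists (to_nat (Z.to_nat k, to_nat (Z.to_nat (- k), pred D))).
  unfold R_of_code. rewrite cancel_of_to. cbn [fst snd]. rewrite cancel_of_to.
  rewrite INR_Z_to_nat_sub, Nat.succ_pred_pos by exact HD0.
  assert (HDp : 0 < INR D) by (apply lt_0_INR; exact HD0).
  replace (IZR k / INR D - x) with ((IZR k - x * INR D) * / INR D) by (field; lra).
  assert (HDi : 0 < / INR D) by (apply Rinv_0_lt_compat; exact HDp).
  rewrite Rabs_right by nra.
  apply (Rle_lt_trans _ (1 * / INR D)); [apply Rmult_le_compat_r|]; lra.
Qed.

Definition C_of_code (c : nat) : C := let (c1, c2) := of_nat c in (R_of_code c1, R_of_code c2).

Lemma C_of_code_approx z eps : 0 < eps -> exists c, Cmod (C_of_code c - z) ^ 2 <= eps.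
Proof.
  intros He. set (d := Rmin 1 (eps / 2)).
  assert (Hd : 0 < d) by (apply Rmin_pos; lra).
  assert (Hd2 : d * d <= eps / 2).
  { pose proof (Rmin_l 1 (eps / 2)) as H1. pose proof (Rmin_r 1 (eps / 2)) as H2.
    fold d in H1, H2. nra. }
  destruct (R_of_code_approx (Re z) d Hd) as [c1 Hc1].
  destruct (R_of_code_approx (Im z) d Hd) as [c2 Hc2].
  exists (to_nat (c1, c2)). unfold C_of_code. rewrite cancel_of_to, Cmod2_alt.
  apply Rabs_def2 in Hc1, Hc2. unfold Re, Im in *. simpl. nra.
Qed.

Definition code_nth (r i : nat) : nat := fst (of_nat (Nat.iter i (fun r => snd (of_nat r)) r)).

Lemma code_nth_choice (P : nat -> nat -> Prop) N :
  (forall i, (i < N)%nat -> exists c, P i c) ->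
  exists r, forall i, (i < N)%nat -> P i (code_nth r i).
Proof.
  revert P. induction N as [|N IH]; intros P HP.
  - exists O. intros; lia.
  - destruct (HP O ltac:(lia)) as [c0 Hc0].
    destruct (IH (fun i => P (S i))) as [r Hr]; [intros i Hi; apply HP; lia|].
    exists (to_nat (c0, r)). intros [|i] Hi; unfold code_nth.
    + cbn [Nat.iter nat_rect]. rewrite cancel_of_to. exact Hc0.
    + rewrite Nat.iter_succ_r, cancel_of_to. apply Hr. lia.
Qed.

Definition balance (N M : nat) (q : nat -> C) : nat -> C := fun i =>
  if (i <? N)%nat then q i
  else if (i <? N + S M)%nat then (RtoC (/ INR (S M)) * - csum q N)%C else 0%C.

Lemma balance_support N M q i : (N + S M <= i)%nat -> balance N M q i = 0%C.
Proof.
  intros Hi. unfold balance.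
  destruct (Nat.ltb_spec i N); [lia|]. destruct (Nat.ltb_spec i (N + S M)); [lia | reflexivity].
Qed.

Lemma balance_sum N M q : csum (balance N M q) (N + S M) = 0%C.
Proof.
  rewrite csum_add_range.
  rewrite (csum_ext (balance N M q) q),
    (csum_ext (fun j => balance N M q (N + j)) (fun _ => RtoC (/ INR (S M)) * - csum q N)%C),
    csum_const.
  - rewrite RtoC_mult_inv_l by (apply not_0_INR; lia). apply Cplus_opp_r.
  - intros j Hj. unfold balance.
    destruct (Nat.ltb_spec (N + j) N); [lia|].
    destruct (Nat.ltb_spec (N + j) (N + S M)); [reflexivity | lia].
  - intros i Hi. unfold balance. destruct (Nat.ltb_spec i N); [reflexivity | lia].
Qed.

Lemma sqnorm_le_balance_sub N M q g d B : 0 <= d ->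
  (forall i, (i < N)%nat -> Cmod (q i - g i) ^ 2 <= d) ->
  sqnorm_le (fun i => if (i <? N)%nat then 0%C else g i) B ->
  sqnorm_le (fun i => balance N M q i - g i)%C
    (2 * (2 * (INR N * d) + 2 * (Cmod (csum q N) ^ 2 / INR (S M))) + 2 * B).
Proof.
  intros Hd Hq Htail.
  set (d1 := (fun i => if (i <? N)%nat then q i - g i else 0)%C : nat -> C).
  set (d2 := (fun i => if (i <? N)%nat then 0 else balance N M q i)%C : nat -> C).
  set (d3 := (fun i => - (if (i <? N)%nat then 0 else g i))%C : nat -> C).
  replace (fun i => balance N M q i - g i)%C with (fun i => (d1 i + d2 i) + d3 i)%C.
  2: { apply functional_extensionality. intros i. unfold d1, d2, d3, balance.
       destruct (Nat.ltb_spec i N); ring. }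
  assert (HSM : 0 < INR (S M)) by (apply lt_0_INR; lia).
  apply sqnorm_le_add; [apply sqnorm_le_add|].
  - apply (sqnorm_le_weaken _ (sqsum d1 N)).
    + rewrite <- (Rmult_1_l d) at 1. rewrite <- rsum_const.
      apply rsum_le. intros i Hi. unfold d1.
      destruct (Nat.ltb_spec i N); [|lia]. rewrite Rmult_1_l. auto.
    + apply sqnorm_le_finite. intros i Hi. unfold d1.
      destruct (Nat.ltb_spec i N); [lia | reflexivity].
  - apply (sqnorm_le_weaken _ (sqsum d2 (N + S M))).
    + unfold sqsum. rewrite rsum_add_range, rsum_eq_0, Rplus_0_l.
      * rewrite (rsum_ext _ (fun _ => (/ INR (S M)) ^ 2 * Cmod (csum q N) ^ 2)), rsum_const.
        -- right. field. lra.
        -- intros j Hj. unfold d2, balance.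
           destruct (Nat.ltb_spec (N + j) N); [lia|].
           destruct (Nat.ltb_spec (N + j) (N + S M)); [|lia].
           rewrite Cmod_RtoC_mult_sq, Cmod_opp. reflexivity.
      * intros i Hi. unfold d2. destruct (Nat.ltb_spec i N); [|lia]. rewrite Cmod_0. ring.
    + apply sqnorm_le_finite. intros i Hi. unfold d2.
      destruct (Nat.ltb_spec i N); [lia|]. apply balance_support. exact Hi.
  - intros K. unfold sqsum, d3.
    rewrite (rsum_ext _ (fun i => Cmod (if (i <? N)%nat then 0%C else g i) ^ 2)).
    + apply Htail.
    + intros i _. rewrite Cmod_opp. reflexivity.
Qed.

(* The code [c] of [dense_vec c] stands for a triple [(N, (M, r))]: the first [N]
   coordinates are the complex numbers coded by the list [r], followed by [S M]
   balancing coordinates. *)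
Definition dense_vec (c : nat) : nat -> C :=
  balance (fst (of_nat c)) (fst (of_nat (snd (of_nat c))))
    (fun i => C_of_code (code_nth (snd (of_nat (snd (of_nat c)))) i)).

Definition dense_len (c : nat) : nat := fst (of_nat c) + S (fst (of_nat (snd (of_nat c)))).

Lemma dense_vec_support c i : (dense_len c <= i)%nat -> dense_vec c i = 0%C.
Proof. apply balance_support. Qed.

Lemma dense_vec_sum c : csum (dense_vec c) (dense_len c) = 0%C.
Proof. apply balance_sum. Qed.

Lemma inH2_dense_vec c : inH2 (dense_vec c).
Proof. apply (inH2_of_sqnorm_le _ _ (sqnorm_le_finite _ _ (dense_vec_support c))). Qed.

Lemma dense_vec_approx g eps : inH2 g -> 0 < eps ->
  exists c, sqnorm_le (fun i => dense_vec c i - g i)%C eps.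
Proof.
  intros Hg He.
  destruct (sqnorm_le_tail g (eps / 8) Hg) as [N HN]; [lra|].
  set (d := eps / (16 * (INR N + 1))).
  assert (Hd : 0 < d) by (apply Rdiv_lt_0_compat; [lra | pose proof (pos_INR N); lra]).
  destruct (code_nth_choice (fun i c => Cmod (C_of_code c - g i) ^ 2 <= d) N) as [r Hr].
  { intros i _. apply C_of_code_approx. exact Hd. }
  set (s := csum (fun i => C_of_code (code_nth r i)) N).
  pose proof (nat_above_gt (16 * Cmod s ^ 2 / eps)) as HM.
  set (M := nat_above (16 * Cmod s ^ 2 / eps)) in HM |- *.
  exists (to_nat (N, to_nat (M, r))). unfold dense_vec. rewrite cancel_of_to. cbn [fst snd].
  rewrite cancel_of_to. cbn [fst snd].
  eapply sqnorm_le_weaken; [|apply sqnorm_le_balance_sub; eauto; lra].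
  fold s. assert (HNd : INR N * d <= eps / 16).
  { unfold d. pose proof (pos_INR N).
    apply (Rmult_le_reg_r (16 * (INR N + 1))); [lra|]. field_simplify; nra. }
  assert (Hs : Cmod s ^ 2 / INR (S M) <= eps / 16).
  { rewrite S_INR. pose proof (pow2_ge_0 (Cmod s)). pose proof (pos_INR M).
    apply (Rmult_le_reg_r (INR M + 1)); [lra|]. field_simplify; [|lra].
    apply (Rmult_lt_compat_r eps) in HM; [|lra]. field_simplify in HM; lra. }
  lra.
Qed.

Lemma block_sum_add_spread N (u v : nat -> C) L : (1 <= N)%nat -> (L <= N)%nat ->
  (forall i, (L <= i)%nat -> u i = 0%C) -> csum u L = 0%C ->
  block_sum N (fun i => u i + spread N v i)%C = v.
Proof.
  intros HN HL Hu Hsum.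
  rewrite block_sum_plus, (block_sum_zero_sum N u L HL Hu Hsum), (block_sum_spread N v HN).
  apply functional_extensionality. intros a. apply Cplus_0_l.
Qed.

Lemma INR_pow_pos n e : (1 <= n)%nat -> 0 < INR (n ^ e).
Proof. intros Hn. apply lt_0_INR. pose proof (Nat.pow_nonzero n e). lia. Qed.

Lemma sqnorm_le_spread_pow_eventually n v B d : (2 <= n)%nat -> sqnorm_le v B -> 0 < d ->
  exists N, forall k, (N <= k)%nat -> sqnorm_le (spread (n ^ k) v) d.
Proof.
  intros Hn Hv Hd. pose proof (pow_nat_above_gt n (2 * B / d) Hn) as HN.
  set (N := nat_above (2 * B / d)) in HN. exists N. intros k Hk.
  pose proof (INR_pow_pos n k ltac:(lia)) as Hk'. pose proof (Nat.pow_nonzero n k ltac:(lia)).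
  assert (HNk : INR (n ^ N) <= INR (n ^ k)) by (apply le_INR, Nat.pow_le_mono_r; lia).
  eapply sqnorm_le_weaken; [|apply sqnorm_le_spread; [lia | exact Hv]].
  assert (H2B : 2 * B < d * INR (n ^ k)).
  { apply (Rmult_lt_compat_r d) in HN; [|exact Hd].
    replace (2 * B / d * d) with (2 * B) in HN by (field; lra). nra. }
  apply (Rmult_le_reg_r (INR (n ^ k))); [exact Hk'|].
  replace (2 / INR (n ^ k) * B * INR (n ^ k)) with (2 * B) by (field; lra). lra.
Qed.

Lemma W_adjoint_mixing n Wstar : (2 <= n)%nat -> is_adjoint_H2 (W n) Wstar -> mixing Wstar.
Proof.
  intros Hn Hadj U V [HU HUopen] [HV HVopen] [u0 Hu0] [v0 Hv0].
  destruct (HUopen u0 Hu0) as [e1 [He1 HUball]]. destruct (HVopen v0 Hv0) as [e2 [He2 HVball]].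
  assert (He1' : 0 < e1 ^ 2) by (apply pow_lt; lra).
  assert (He2' : 0 < e2 ^ 2) by (apply pow_lt; lra).
  destruct (dense_vec_approx u0 (e1 ^ 2 / 8) (HU _ Hu0)) as [cu Hu]; [lra|].
  destruct (dense_vec_approx v0 (e2 ^ 2 / 2) (HV _ Hv0)) as [cv Hv]; [lra|].
  set (u := dense_vec cu) in *. set (v := dense_vec cv) in *.
  assert (Vv : V v).
  { apply HVball; [apply inH2_dense_vec|]. apply (h2dist_lt _ _ (e2 ^ 2 / 2)); auto; lra. }
  destruct (sqnorm_le_spread_pow_eventually n v _ (e1 ^ 2 / 8) Hn
    (sqnorm_le_finite v _ (dense_vec_support cv))) as [N HN]; [lra|].
  exists (Nat.max N (dense_len cu)). intros k Hk.
  assert (HLu : (dense_len cu <= n ^ k)%nat).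
  { pose proof (Nat.pow_gt_lin_r n (dense_len cu) ltac:(lia)).
    pose proof (Nat.pow_le_mono_r n (dense_len cu) k ltac:(lia) ltac:(lia)). lia. }
  specialize (HN k ltac:(lia)). pose proof (Nat.pow_nonzero n k ltac:(lia)).
  set (f := (fun i => u i + spread (n ^ k) v i)%C).
  assert (Hf : inH2 f).
  { exact (inH2_of_sqnorm_le _ _
      (sqnorm_le_add _ _ _ _ (sqnorm_le_finite u _ (dense_vec_support cu)) HN)). }
  exists f. split.
  - apply HUball; [exact Hf|].
    apply (h2dist_lt _ _ (2 * (e1 ^ 2 / 8) + 2 * (e1 ^ 2 / 8))); [lra | lra|].
    replace (fun i => f i - u0 i)%C with (fun i => (u i - u0 i) + spread (n ^ k) v i)%C.
    + apply sqnorm_le_add; assumption.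
    + apply functional_extensionality. intros i. unfold f. ring.
  - rewrite (W_adjoint_iter n) by (auto; lia). unfold f.
    rewrite (block_sum_add_spread _ u v (dense_len cu)); auto;
      [lia | apply dense_vec_support | apply dense_vec_sum].
Qed.

Lemma rsum_geom K : rsum (fun j => / 2 ^ j) K = 2 - 2 / 2 ^ K.
Proof.
  induction K as [|K IH]; simpl rsum; [simpl; field|].
  rewrite IH. simpl. field. apply pow_nonzero. lra.
Qed.

Lemma rsum_geom_le K : rsum (fun j => / 2 ^ j) K <= 2.
Proof.
  rewrite rsum_geom. assert (0 < 2 / 2 ^ K) by (apply Rdiv_lt_0_compat; [|apply pow_lt]; lra). lra.
Qed.

Lemma rsum_geom_tail_le i K : rsum (fun j => if (i <? j)%nat then / 2 ^ j else 0) K <= / 2 ^ i.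
Proof.
  set (f j := if (i <? j)%nat then / 2 ^ j else 0).
  assert (Hf : forall j, 0 <= f j).
  { intros j. unfold f. destruct (i <? j)%nat; [left; apply Rinv_0_lt_compat, pow_lt|]; lra. }
  apply (Rle_trans _ (rsum f (S i + K))); [apply rsum_le_mono; auto; lia|].
  rewrite rsum_add_range, rsum_eq_0, Rplus_0_l.
  - rewrite (rsum_ext _ (fun j => / 2 ^ S i * / 2 ^ j)), rsum_mult_l.
    + pose proof (rsum_geom_le K). assert (0 < / 2 ^ S i) by (apply Rinv_0_lt_compat, pow_lt; lra).
      replace (/ 2 ^ i) with (/ 2 ^ S i * 2) by (simpl; field; apply pow_nonzero; lra). nra.
    + intros j _. unfold f. destruct (Nat.ltb_spec i (S i + j)); [|lia].
      rewrite pow_add, Rinv_mult. reflexivity.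
  - intros j Hj. unfold f. destruct (Nat.ltb_spec i j); [lia | reflexivity].
Qed.

Lemma Cmod_csum_geom_weighted (f : nat -> C) K :
  Cmod (csum f K) ^ 2 <= 2 * rsum (fun j => 2 ^ j * Cmod (f j) ^ 2) K.
Proof.
  eapply Rle_trans; [apply (Cmod_csum_Cauchy_Schwarz f (fun j => / 2 ^ j))|].
  - intros j. apply Rinv_0_lt_compat, pow_lt. lra.
  - rewrite (rsum_ext (fun j => Cmod (f j) ^ 2 / / 2 ^ j) (fun j => 2 ^ j * Cmod (f j) ^ 2)).
    + apply Rmult_le_compat_r; [|apply rsum_geom_le].
      apply rsum_nonneg. intros j.
      pose proof (pow_lt 2 j). pose proof (pow2_ge_0 (Cmod (f j))). nra.
    + intros j _. field. apply pow_nonzero. lra.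
Qed.

Definition diag_sum (y : nat -> nat -> C) : nat -> C := fun i => csum (fun j => y j i) (S i).

Section DiagonalSum.

Variable y : nat -> nat -> C.
Hypothesis y_low : forall j i, (i < j)%nat -> y j i = 0%C.

Lemma diag_sum_eq_csum i K : (i < K)%nat -> diag_sum y i = csum (fun j => y j i) K.
Proof. intros HK. symmetry. apply csum_zero_beyond; [intros; apply y_low|]; lia. Qed.

Lemma sqnorm_le_diag_sum b B : (forall j, sqnorm_le (y j) (b j)) ->
  (forall K, rsum (fun j => 2 ^ j * b j) K <= B) -> sqnorm_le (diag_sum y) (2 * B).
Proof.
  intros Hy HB K. unfold sqsum.
  rewrite (rsum_ext _ (fun i => Cmod (csum (fun j => y j i) K) ^ 2))
    by (intros i Hi; rewrite (diag_sum_eq_csum i K Hi); reflexivity).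
  eapply Rle_trans; [apply rsum_le; intros i _; apply Cmod_csum_geom_weighted|].
  rewrite rsum_mult_l, rsum_swap. apply Rmult_le_compat_l; [lra|].
  eapply Rle_trans; [|apply (HB K)]. apply rsum_le. intros j _.
  rewrite rsum_mult_l. apply Rmult_le_compat_l; [left; apply pow_lt; lra | apply Hy].
Qed.

Lemma diag_sum_split i :
  diag_sum y = (fun k => csum (fun j => y j k) (S i) +
                         diag_sum (fun j => if (i <? j)%nat then y j else fun _ => 0%C) k)%C.
Proof.
  apply functional_extensionality. intros k.
  set (K := (S k + S i)%nat).
  set (t := fun j => if (i <? j)%nat then y j else fun _ => 0%C).
  assert (Hy : forall j, (S k <= j)%nat -> y j k = 0%C) by (intros; apply y_low; lia).
  assert (Ht : forall j, (S k <= j)%nat -> t j k = 0%C).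
  { intros j Hj. unfold t. destruct (i <? j)%nat; auto. }
  unfold diag_sum.
  rewrite <- (csum_zero_beyond (fun j => y j k) (S k) K),
    <- (csum_zero_beyond (fun j => t j k) (S k) K)
    by (auto; lia).
  rewrite !(csum_split _ (S i) K) by lia. rewrite (csum_eq_0 (fun j => t j k)), Cplus_0_l.
  - f_equal. apply csum_ext. intros j _. unfold t.
    destruct (Nat.ltb_spec i (S i + j)); [reflexivity | lia].
  - intros j Hj. unfold t. destruct (Nat.ltb_spec i j); [lia | reflexivity].
Qed.

End DiagonalSum.

Definition psi (j : nat) : nat -> C := dense_vec (fst (of_nat j)).

Definition psi_len (j : nat) : nat := dense_len (fst (of_nat j)).

Definition psi_mass (j : nat) : R := sqsum (psi j) (psi_len j).

Definition prev_psi_len (j : nat) : nat := match j with O => O | S i => psi_len i end.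

Lemma psi_recurrent c c0 : exists i, (c0 <= i)%nat /\ psi i = dense_vec c.
Proof.
  exists (to_nat (c, c0)). split; [pose proof (to_nat_non_decreasing c c0); lia|].
  unfold psi. rewrite cancel_of_to. reflexivity.
Qed.

Lemma sqnorm_le_psi j : sqnorm_le (psi j) (psi_mass j).
Proof. apply sqnorm_le_finite, dense_vec_support. Qed.

(* [n ^ gap j] has to beat [16 * 4^j * psi_mass j] (later terms are small), the support of
   [psi (j - 1)] (earlier terms are annihilated) and [2 j] (term [j] vanishes below [j]). *)
Definition gap (j : nat) : nat :=
  nat_above (16 * 4 ^ j * psi_mass j + INR (prev_psi_len j) + 2 * INR j).

Fixpoint expo (j : nat) : nat := match j with O => gap O | S i => (expo i + gap (S i))%nat end.

Lemma expo_le i j : (i <= j)%nat -> (expo i <= expo j)%nat.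
Proof. induction 1 as [|j _ IH]; simpl; lia. Qed.

Lemma gap_le_expo j : (gap j <= expo j)%nat.
Proof. destruct j; simpl; lia. Qed.

Lemma expo_add_gap_le i j : (i < j)%nat -> (expo i + gap j <= expo j)%nat.
Proof. intros H. destruct j as [|j]; [lia|]. simpl. pose proof (expo_le i j). lia. Qed.

Section Hypercyclic.

Variable n : nat.
Hypothesis Hn : (2 <= n)%nat.

Definition piece (j : nat) : nat -> C := spread (n ^ expo j) (psi j).

Definition piece_after (i j : nat) : nat -> C := if (i <? j)%nat then piece j else fun _ => 0%C.

Definition hypercyclic_vec : nat -> C := diag_sum piece.

Lemma gap_spec j : 16 * 4 ^ j * psi_mass j + INR (prev_psi_len j) + 2 * INR j < INR (n ^ gap j).
Proof. apply pow_nat_above_gt. exact Hn. Qed.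

Lemma gap_terms_nonneg j :
  0 <= 16 * 4 ^ j * psi_mass j /\ 0 <= INR (prev_psi_len j) /\ 0 <= INR j.
Proof.
  pose proof (sqsum_nonneg (psi j) (psi_len j)). pose proof (pow_le 4 j).
  repeat split; [unfold psi_mass; nra | apply pos_INR | apply pos_INR].
Qed.

Lemma psi_mass_le_gap j : 16 * (2 ^ j * 2 ^ j) * psi_mass j <= INR (n ^ gap j).
Proof.
  rewrite <- Rpow_mult_distr. replace (2 * 2) with 4 by lra.
  pose proof (gap_spec j). pose proof (gap_terms_nonneg j). lra.
Qed.

Lemma psi_len_lt_gap i : (psi_len i < n ^ gap (S i))%nat.
Proof.
  apply INR_lt. pose proof (gap_spec (S i)). pose proof (gap_terms_nonneg (S i)). simpl in *. lra.
Qed.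

Lemma double_lt_gap j : (2 * j < n ^ gap j)%nat.
Proof.
  apply INR_lt. rewrite mult_INR. replace (INR 2) with 2 by (simpl; lra).
  pose proof (gap_spec j). pose proof (gap_terms_nonneg j). lra.
Qed.

Lemma pow_expo_nonzero j : (n ^ expo j <> 0)%nat.
Proof. apply Nat.pow_nonzero. lia. Qed.

Lemma piece_low j k : (k < j)%nat -> piece j k = 0%C.
Proof.
  intros Hk. apply spread_low. apply (Nat.lt_le_trans _ j); [exact Hk|].
  apply Nat.div_le_lower_bound; [lia|].
  pose proof (double_lt_gap j).
  pose proof (Nat.pow_le_mono_r n _ _ ltac:(lia) (gap_le_expo j)). lia.
Qed.

Lemma sqnorm_le_piece j : sqnorm_le (piece j) (2 / INR (n ^ expo j) * psi_mass j).
Proof. apply sqnorm_le_spread; [pose proof (pow_expo_nonzero j); lia | apply sqnorm_le_psi]. Qed.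

Lemma piece_small a j : (a + gap j <= expo j)%nat ->
  INR (n ^ a) * (2 ^ j * (2 / INR (n ^ expo j) * psi_mass j)) <= / 2 ^ j / 8.
Proof.
  intros Ha. pose proof (psi_mass_le_gap j) as Hg.
  pose proof (INR_pow_pos n a ltac:(lia)). pose proof (INR_pow_pos n (expo j) ltac:(lia)).
  assert (H2j : 0 < 2 ^ j) by (apply pow_lt; lra).
  assert (HAG : INR (n ^ a) * INR (n ^ gap j) <= INR (n ^ expo j)).
  { rewrite <- mult_INR, <- Nat.pow_add_r. apply le_INR, Nat.pow_le_mono_r; lia. }
  apply (Rmult_le_reg_r (INR (n ^ expo j) * 2 ^ j * 8)); [nra|].
  replace (INR (n ^ a) * (2 ^ j * (2 / INR (n ^ expo j) * psi_mass j))
           * (INR (n ^ expo j) * 2 ^ j * 8))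
    with (INR (n ^ a) * (16 * (2 ^ j * 2 ^ j) * psi_mass j)) by (field; lra).
  replace (/ 2 ^ j / 8 * (INR (n ^ expo j) * 2 ^ j * 8)) with (INR (n ^ expo j)) by (field; lra).
  apply (Rle_trans _ (INR (n ^ a) * INR (n ^ gap j))); [apply Rmult_le_compat_l; lra | exact HAG].
Qed.

Lemma block_sum_piece_before i j : (i < j)%nat -> block_sum (n ^ expo j) (piece i) = (fun _ => 0%C).
Proof.
  intros Hij. pose proof (expo_le (S i) j Hij) as Hexpo. simpl in Hexpo.
  unfold piece.
  replace (n ^ expo j)%nat with (n ^ expo i * n ^ (expo j - expo i))%nat
    by (rewrite <- Nat.pow_add_r; f_equal; lia).
  rewrite <- block_sum_block_sum, block_sum_spread by (pose proof (pow_expo_nonzero i); lia).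
  apply (block_sum_zero_sum _ _ (psi_len i)); [| apply dense_vec_support | apply dense_vec_sum].
  pose proof (psi_len_lt_gap i). pose proof (Nat.pow_le_mono_r n (gap (S i)) (expo j - expo i)).
  lia.
Qed.

Lemma block_sum_head i :
  block_sum (n ^ expo i) (fun k => csum (fun j => piece j k) (S i)) = psi i.
Proof.
  apply functional_extensionality. intros a. rewrite block_sum_csum.
  change (csum (fun j => block_sum (n ^ expo i) (piece j) a) i
          + block_sum (n ^ expo i) (piece i) a = psi i a)%C.
  rewrite csum_eq_0, Cplus_0_l.
  - unfold piece. rewrite block_sum_spread; [reflexivity|]. pose proof (pow_expo_nonzero i). lia.
  - intros j Hj. rewrite block_sum_piece_before by exact Hj. reflexivity.
Qed.

Lemma sqnorm_le_piece_after i j :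
  sqnorm_le (piece_after i j) (if (i <? j)%nat then 2 / INR (n ^ expo j) * psi_mass j else 0).
Proof.
  unfold piece_after. destruct (i <? j)%nat; [apply sqnorm_le_piece|].
  intros K. unfold sqsum. rewrite rsum_eq_0; [lra|]. intros. rewrite Cmod_0. ring.
Qed.

Lemma sqnorm_le_block_sum_tail i :
  sqnorm_le (block_sum (n ^ expo i) (diag_sum (piece_after i))) (/ 2 ^ i / 4).
Proof.
  pose proof (INR_pow_pos n (expo i) ltac:(lia)) as HP.
  assert (H2i : 2 ^ i <> 0) by (apply pow_nonzero; lra).
  replace (/ 2 ^ i / 4) with (INR (n ^ expo i) * (2 * (/ INR (n ^ expo i) * (/ 2 ^ i / 8))))
    by (field; lra).
  apply sqnorm_le_block_sum, sqnorm_le_diag_sum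
    with (b := fun j => if (i <? j)%nat then 2 / INR (n ^ expo j) * psi_mass j else 0).
  - intros j k Hk. unfold piece_after.
    destruct (i <? j)%nat; [apply piece_low; exact Hk | reflexivity].
  - apply sqnorm_le_piece_after.
  - intros K. eapply Rle_trans.
    + apply (rsum_le _ (fun j => / INR (n ^ expo i) * / 8 * (if (i <? j)%nat then / 2 ^ j else 0))).
      intros j _. destruct (Nat.ltb_spec i j) as [Hij|Hij]; [|lra].
      apply (Rmult_le_reg_l (INR (n ^ expo i))); [exact HP|].
      replace (INR (n ^ expo i) * (/ INR (n ^ expo i) * / 8 * / 2 ^ j)) with (/ 2 ^ j / 8)
        by (field; split; [apply pow_nonzero|]; lra).
      apply piece_small, expo_add_gap_le. exact Hij.
    + rewrite rsum_mult_l. pose proof (rsum_geom_tail_le i K).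
      assert (0 < / INR (n ^ expo i) * / 8)
        by (apply Rmult_lt_0_compat; apply Rinv_0_lt_compat; lra).
      unfold Rdiv. nra.
Qed.

Lemma inH2_hypercyclic_vec : inH2 hypercyclic_vec.
Proof.
  apply (inH2_of_sqnorm_le _ (2 * (/ 8 * 2))).
  apply (sqnorm_le_diag_sum piece piece_low (fun j => 2 / INR (n ^ expo j) * psi_mass j));
    [exact sqnorm_le_piece|].
  intros K. apply (Rle_trans _ (rsum (fun j => / 8 * / 2 ^ j) K)).
  - apply rsum_le. intros j _. pose proof (piece_small 0 j (gap_le_expo j)) as Hj.
    rewrite Nat.pow_0_r in Hj. change (INR 1) with 1 in Hj. lra.
  - rewrite rsum_mult_l. pose proof (rsum_geom_le K). lra.
Qed.

Lemma hypercyclic_vec_orbit_dense g eps : inH2 g -> 0 < eps ->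
  exists k, h2dist (block_sum (n ^ k) hypercyclic_vec) g < eps.
Proof.
  intros Hg He. assert (He2 : 0 < eps ^ 2) by (apply pow_lt; lra).
  destruct (dense_vec_approx g (eps ^ 2 / 8) Hg) as [c Hc]; [lra|].
  pose proof (pow_nat_above_gt 2 (8 / eps ^ 2) (le_n 2)) as Hc0.
  destruct (psi_recurrent c (nat_above (8 / eps ^ 2))) as [i [Hi Hpsi]].
  assert (Hsmall : / 2 ^ i < eps ^ 2 / 8).
  { rewrite pow_INR in Hc0. replace (INR 2) with 2 in Hc0 by (simpl; lra).
    assert (H2i : 8 / eps ^ 2 < 2 ^ i)
      by (apply (Rlt_le_trans _ _ _ Hc0), Rle_pow; [lra | exact Hi]).
    replace (eps ^ 2 / 8) with (/ (8 / eps ^ 2)) by (field; lra).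
    apply Rinv_lt_contravar; [|exact H2i].
    apply Rmult_lt_0_compat; [apply Rdiv_lt_0_compat; lra | apply pow_lt; lra]. }
  exists (expo i). unfold hypercyclic_vec.
  rewrite (diag_sum_split piece piece_low i), block_sum_plus, block_sum_head, Hpsi.
  fold (piece_after i).
  apply (h2dist_lt _ _ (2 * (eps ^ 2 / 8) + 2 * (/ 2 ^ i / 4))); [exact He | lra |].
  replace (fun k => dense_vec c k + block_sum (n ^ expo i) (diag_sum (piece_after i)) k - g k)%C
    with (fun k => (dense_vec c k - g k) + block_sum (n ^ expo i) (diag_sum (piece_after i)) k)%C.
  - apply sqnorm_le_add; [exact Hc | apply sqnorm_le_block_sum_tail].
  - apply functional_extensionality. intros k. ring.
Qed.

End Hypercyclic.

Lemma W_adjoint_hypercyclic n Wstar :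
  (2 <= n)%nat -> is_adjoint_H2 (W n) Wstar -> hypercyclic Wstar.
Proof.
  intros Hn Hadj. exists (hypercyclic_vec n). split; [exact (inH2_hypercyclic_vec n Hn)|].
  intros g Hg eps He. destruct (hypercyclic_vec_orbit_dense n Hn g eps Hg He) as [k Hk].
  exists k. rewrite (W_adjoint_iter n) by (auto using inH2_hypercyclic_vec; lia). exact Hk.
Qed.

Theorem mainTheorem1 :
  forall (n : nat), (2 <= n)%nat ->
  forall Wstar : (nat -> C) -> (nat -> C),
    is_adjoint_H2 (W n) Wstar ->
    mixing Wstar /\ hypercyclic Wstar.
Proof.
  intros n Hn Wstar Hadj. split.
  - exact (W_adjoint_mixing n Wstar Hn Hadj).
  - exact (W_adjoint_hypercyclic n Wstar Hn Hadj).
Qed.
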